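(* Let $a,w\in \mathcal{A}$. Then the following are equivalent: (1) $a$ has a $w$-weighted generalized core-EP inverse. (2) There exist $z,y\in \mathcal{A}$ such that $a=z+y$, $(wz)^*(wy)=ywz=0$, $z$ has a $w$-weighted core inverse, and $y\in \mathcal{A}_w^{qnil}$. (3) There exist $z,y\in \mathcal{A}$ such that $a=z+y$, $ywz=0$, $z$ has a $w$-weighted core inverse, and $y\in \mathcal{A}_w^{qnil}$. In this case, $a^{\mathrm{gcEP},w}=z^{\mathrm{core},w}$.
   Context: $\mathcal{A}$ is a complex Banach *-algebra with identity. An element $a$ has a $w$-weighted core inverse if there is $x\in\mathcal{A}$ with $a(wx)^2=x$, $(wawx)^*=wawx$, $xw(aw)^2=aw$; such $x$ is unique and denoted $a^{\mathrm{core},w}$. An element $a$ has a $w$-weighted generalized core-EP inverse if there is $x\in\mathcal{A}$ with $a(wx)^2=x$, $(wawx)^*=wawx$, $\lim_{n\to\infty}\|(aw)^n-(xw)(aw)^{n+1}\|^{1/n}=0$; such $x$ is unique and denoted $a^{\mathrm{gcEP},w}$. $\mathcal{A}_w^{qnil}=\{y\in\mathcal{A}: \lim_{n\to\infty}\|(yw)^n\|^{1/n}=0\}$. *)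

From HB Require Import structures.
From mathcomp Require Import all_boot all_order all_algebra.
From mathcomp Require Import all_classical all_reals all_analysis.
From mathcomp Require Import complex.
Set Implicit Arguments. Unset Strict Implicit. Unset Printing Implicit Defensive.
Import Order.TTheory GRing.Theory Num.Theory.
Import numFieldNormedType.Exports.
Local Open Scope ring_scope.
Local Open Scope classical_set_scope.

Record BStarAlg (R : realType) := {
  bs_car :> completeNormedModType R[i];
  bs_mul : bs_car -> bs_car -> bs_car;
  bs_one : bs_car;
  bs_star : bs_car -> bs_car;
  bs_mulA : forall x y z, bs_mul x (bs_mul y z) = bs_mul (bs_mul x y) z;
  bs_mul1l : forall x, bs_mul bs_one x = x;
  bs_mul1r : forall x, bs_mul x bs_one = x;
  bs_mulDl : forall x y z, bs_mul (x + y) z = bs_mul x z + bs_mul y z;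
  bs_mulDr : forall x y z, bs_mul x (y + z) = bs_mul x y + bs_mul x z;
  bs_mulZl : forall (c : R[i]) x y, bs_mul (c *: x) y = c *: bs_mul x y;
  bs_mulZr : forall (c : R[i]) x y, bs_mul x (c *: y) = c *: bs_mul x y;
  bs_norm_mul : forall x y, `|bs_mul x y| <= `|x| * `|y|;
  bs_starD : forall x y, bs_star (x + y) = bs_star x + bs_star y;
  bs_starZ : forall (c : R[i]) x, bs_star (c *: x) = (Num.conj c) *: bs_star x;
  bs_starM : forall x y, bs_star (bs_mul x y) = bs_mul (bs_star y) (bs_star x);
  bs_starK : forall x, bs_star (bs_star x) = x
}.

Notation "x ⋆ y" := (bs_mul x y) (at level 40, left associativity).
Notation "x ^#" := (bs_star x) (at level 2, format "x ^#").

Section Defs.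
Variables (R : realType) (A : BStarAlg R).

Fixpoint bpow (x : A) (n : nat) : A :=
  match n with O => bs_one A | S m => bpow x m ⋆ x end.

Definition rnorm (x : A) : R := complex.Re `|x|.

Definition root_lim0 (u : nat -> A) : Prop :=
  (fun n : nat => rnorm (u n) `^ (n%:R)^-1) @ \oo --> (0 : R).

Definition is_wcore (a w x : A) : Prop :=
  [/\ a ⋆ ((w ⋆ x) ⋆ (w ⋆ x)) = x,
      (w ⋆ a ⋆ w ⋆ x)^# = w ⋆ a ⋆ w ⋆ x
    & x ⋆ w ⋆ ((a ⋆ w) ⋆ (a ⋆ w)) = a ⋆ w].

Definition has_wcore (a w : A) : Prop := exists x, is_wcore a w x.

Definition is_wgcEP (a w x : A) : Prop :=
  [/\ a ⋆ ((w ⋆ x) ⋆ (w ⋆ x)) = x,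
      (w ⋆ a ⋆ w ⋆ x)^# = w ⋆ a ⋆ w ⋆ x
    & root_lim0 (fun n => bpow (a ⋆ w) n - (x ⋆ w) ⋆ bpow (a ⋆ w) n.+1)].

Definition has_wgcEP (a w : A) : Prop := exists x, is_wgcEP a w x.

Definition wqnil (w y : A) : Prop := root_lim0 (fun n => bpow (y ⋆ w) n).

End Defs.

From HB Require Import structures.
From mathcomp Require Import all_boot all_order all_algebra.
From mathcomp Require Import all_classical all_reals all_analysis.
From mathcomp Require Import complex.
Import Order.TTheory GRing.Theory Num.Theory.
Import numFieldNormedType.Exports.
Local Open Scope complex_scope.
Local Open Scope ring_scope.
Local Open Scope classical_set_scope.

(* Write g = aw.  The limit condition on x says that (1 - xw g) g^n decays
   faster than any geometric sequence; since every solution x' of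
   a(wx')(wx') = x' satisfies x' = g^n x' (wx')^n, it forces
   x' = xw g x' and, likewise, awx = xw g awx.  With these identities,
   z := awxwa has w-weighted core inverse x, and y := a - z satisfies
   (yw)^(n+1) = m g^(n+1) with m := 1 - awxw = m (1 - xw g), so y is
   w-quasinilpotent; the orthogonality relations are direct computations.
   Conversely, if a = z + y with ywz = 0 and c is the w-core inverse of z, then
   (1 - cw aw)(aw)^n = (1 - cw aw)(yw)^n, so c is a w-gcEP inverse of a.  The
   w-gcEP inverse is unique because wawx1 and wawx2 are self-adjoint
   elements absorbing each other, hence x = c. *)

Lemma powR_le_addr1 (R : realType) (c r : R) :
  0 <= c -> 0 <= r <= 1 -> c `^ r <= c + 1.
Proof.
move=> c0 /andP[r0 r1]; case: (leP c 1) => c1.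
  apply: (@le_trans _ _ 1); last by rewrite lerDr.
  have := ge0_ler_powR r0 _ _ c1; rewrite powR1; apply => //.
  by rewrite nnegrE.
apply: (@le_trans _ _ c); last by rewrite lerDl.
by apply: ler1_powR => //; apply: ltW.
Qed.

Section BStarAlgTheory.
Local Set Implicit Arguments.
Local Unset Strict Implicit.
Context {R : realType} {A : BStarAlg R}.
Implicit Types (g h m p q s u v x y : A) (d t : nat -> A).

Lemma bs_mul0l x : 0 ⋆ x = 0.
Proof. by apply/(addrI (0 ⋆ x)); rewrite -bs_mulDl !addr0. Qed.

Lemma bs_mul0r x : x ⋆ 0 = 0.
Proof. by apply/(addrI (x ⋆ 0)); rewrite -bs_mulDr !addr0. Qed.

Lemma bs_mulNl x y : (- x) ⋆ y = - (x ⋆ y).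
Proof. by apply/(addrI (x ⋆ y)); rewrite -bs_mulDl !subrr bs_mul0l. Qed.

Lemma bs_mulNr x y : x ⋆ (- y) = - (x ⋆ y).
Proof. by apply/(addrI (x ⋆ y)); rewrite -bs_mulDr !subrr bs_mul0r. Qed.

Lemma bs_mulBl x y z : (x - y) ⋆ z = x ⋆ z - y ⋆ z.
Proof. by rewrite bs_mulDl bs_mulNl. Qed.

Lemma bs_mulBr x y z : z ⋆ (x - y) = z ⋆ x - z ⋆ y.
Proof. by rewrite bs_mulDr bs_mulNr. Qed.

Lemma bpowSl g n : bpow g n.+1 = g ⋆ bpow g n.
Proof.
elim: n => [|n IH]; first by rewrite /= bs_mul1l bs_mul1r.
by rewrite -[LHS]/(bpow g n.+1 ⋆ g) [in LHS]IH -bs_mulA.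
Qed.

Lemma bpowS_sub g u n :
  bpow g n - u ⋆ bpow g n.+1 = (bs_one A - u ⋆ g) ⋆ bpow g n.
Proof. by rewrite bs_mulBl bs_mul1l bpowSl bs_mulA. Qed.

Lemma mul_bpowD s q m n :
  q ⋆ s = 0 -> m ⋆ s = 0 -> m ⋆ bpow (s + q) n = m ⋆ bpow q n.
Proof.
move=> qs0; elim: n m => [//|n IH] m ms0.
rewrite !bpowSl !bs_mulA bs_mulDr ms0 add0r IH //.
by rewrite -bs_mulA qs0 bs_mul0r.
Qed.

Lemma bpow_mul_absorb m g n :
  m ⋆ g ⋆ m = m ⋆ g -> bpow (m ⋆ g) n.+1 = m ⋆ bpow g n.+1.
Proof.
move=> mgm; elim: n => [|n IH]; first by rewrite /= !bs_mul1l.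
by rewrite bpowSl IH bs_mulA mgm -bs_mulA -bpowSl.
Qed.

Lemma selfadjoint_absorb_eq p q :
  p^# = p -> q^# = q -> p ⋆ q = q -> q ⋆ p = p -> p = q.
Proof. by move=> sp sq pq qp; rewrite -{1}sq -pq bs_starM sp sq qp. Qed.

Lemma rnorm_ge0 x : 0 <= rnorm x.
Proof. by have := normr_ge0 x; rewrite lecE /= => /andP[_]. Qed.

Lemma normE x : `|x| = (rnorm x)%:C.
Proof. by rewrite /rnorm RRe_real // ger0_real. Qed.

Lemma rnorm_mul x y : rnorm (x ⋆ y) <= rnorm x * rnorm y.
Proof.
by have := bs_norm_mul x y; rewrite !normE lecE /= !mul0r subr0 => /andP[_].
Qed.

Lemma rnorm_eq0 x : rnorm x = 0 -> x = 0.
Proof. by move=> x0; apply/normr0_eq0; rewrite normE x0. Qed.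

Lemma rnorm_mul_bpow p h n :
  rnorm (p ⋆ bpow h n) <= rnorm p * rnorm (bs_one A) * rnorm h ^+ n.
Proof.
elim: n => [|n IH]; first by rewrite expr0 mulr1 rnorm_mul.
rewrite -[p ⋆ _]/(p ⋆ (bpow h n ⋆ h)) bs_mulA exprSr mulrA.
apply: le_trans (rnorm_mul _ _) _.
by apply: ler_wpM2r IH; apply: rnorm_ge0.
Qed.

Lemma root_lim0_eqS d t :
  (forall n, d n.+1 = t n.+1) -> root_lim0 d -> root_lim0 t.
Proof.
rewrite /root_lim0 => dt; rewrite -cvg_shiftS => hd; rewrite -cvg_shiftS.
by under eq_fun do rewrite -dt.
Qed.

Lemma root_lim0_mull x d : root_lim0 d -> root_lim0 (fun n => x ⋆ d n).
Proof.
rewrite /root_lim0 => hd.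
apply: (@squeeze_cvgr _ _ _ _ (fun=> 0)
  (fun n => (rnorm x + 1) * rnorm (d n) `^ (n%:R)^-1)); last 2 first.
- exact: cvg_cst.
- by rewrite -(mulr0 (rnorm x + 1)); apply: cvgM => //; apply: cvg_cst.
near=> n; rewrite powR_ge0 /=.
have r01 : 0 <= (n%:R : R)^-1 <= 1.
  by rewrite invr_ge0 ler0n invf_le1 ?ltr0n ?ler1n //; near: n; exists 1%N.
apply: le_trans (ge0_ler_powR _ _ _ (rnorm_mul x (d n))) _.
- by case/andP: r01.
- exact: rnorm_ge0.
- by rewrite nnegrE mulr_ge0 ?rnorm_ge0.
rewrite powRM ?rnorm_ge0 //; apply: ler_wpM2r; first exact: powR_ge0.
exact: powR_le_addr1 (rnorm_ge0 x) r01.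
Unshelve. all: by end_near.
Qed.

Lemma root_lim0_le_expr d (e : R) :
  root_lim0 d -> 0 < e -> \forall n \near \oo, rnorm (d n) <= e ^+ n.
Proof.
move=> hd e0; have root_le := cvgr_le _ hd _ e0.
near=> n.
have n0 : (0 < n)%N by near: n; apply: nbhs_infty_gt.
have hn : rnorm (d n) `^ (n%:R)^-1 <= e by near: n; exact: root_le.
have root_expr : (rnorm (d n) `^ (n%:R)^-1) ^+ n = rnorm (d n).
  rewrite -powR_mulrn ?powR_ge0 // -powRrM mulVf ?pnatr_eq0 -?lt0n //.
  exact/powRr1/rnorm_ge0.
rewrite -root_expr; apply: lerXn2r hn; rewrite nnegrE ?powR_ge0 //.
exact: ltW.
Unshelve. all: by end_near.
Qed.

Lemma root_lim0_mul_eq0 d t x (C K : R) :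
  0 < K -> root_lim0 d -> (forall n, rnorm (t n) <= C * K ^+ n) ->
  (forall n, x = d n ⋆ t n) -> x = 0.
Proof.
move=> K0 hd ht hx; apply: rnorm_eq0; apply/eqP.
rewrite eq_le rnorm_ge0 andbT.
have half_lt1 : `|(2^-1 : R)| < 1.
  by rewrite ger0_norm ?invr_ge0 ?ler0n // invf_lt1 ?ltr0n // ltr1n.
apply: (cvgr_to_ge (cvg_geometric C half_lt1)).
have e0 : 0 < (2 * K)^-1 by rewrite invr_gt0 mulr_gt0.
have dle := root_lim0_le_expr hd e0.
near=> n.
have hn : rnorm (d n) <= (2 * K)^-1 ^+ n by near: n; exact: dle.
rewrite (hx n); apply: le_trans (rnorm_mul _ _) _.
apply: le_trans (ler_pM (rnorm_ge0 _) (rnorm_ge0 _) hn (ht n)) _.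
by rewrite /= mulrCA -exprMn invfM divfK ?gt_eqF.
Unshelve. all: by end_near.
Qed.

(* v - u g v = ((1 - u g) g^n) (p h^n): the n-th root decay of the first
   factor beats the exponential growth of the second. *)
Lemma root_lim0_fixpoint g u v p h :
  root_lim0 (fun n => bpow g n - u ⋆ bpow g n.+1) ->
  (forall n, v = bpow g n ⋆ (p ⋆ bpow h n)) -> v = u ⋆ g ⋆ v.
Proof.
move=> hD hv; apply/eqP; rewrite -subr_eq0; apply/eqP.
apply: (root_lim0_mul_eq0 (C := rnorm p * rnorm (bs_one A))
                          (K := rnorm h + 1) _ hD).
- by rewrite ltr_wpDl ?rnorm_ge0.
- move=> n; apply: le_trans (rnorm_mul_bpow p h n) _.
  apply: ler_wpM2l; first by rewrite mulr_ge0 ?rnorm_ge0.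
  by apply: lerXn2r; rewrite ?nnegrE ?addr_ge0 ?rnorm_ge0 ?lerDl.
- by move=> n; rewrite bpowS_sub -[RHS]bs_mulA -hv bs_mulBl bs_mul1l.
Qed.

Lemma bpow_aw_wx_cancel a w x n :
  a ⋆ ((w ⋆ x) ⋆ (w ⋆ x)) = x -> bpow (a ⋆ w) n ⋆ (x ⋆ bpow (w ⋆ x) n) = x.
Proof.
move=> ax; elim: n => [|n IH]; first by rewrite /= bs_mul1l bs_mul1r.
rewrite -[bpow (a ⋆ w) n.+1]/(bpow (a ⋆ w) n ⋆ (a ⋆ w)) bpowSl.
have -> : bpow (a ⋆ w) n ⋆ (a ⋆ w) ⋆ (x ⋆ (w ⋆ x ⋆ bpow (w ⋆ x) n))
        = bpow (a ⋆ w) n ⋆ (a ⋆ ((w ⋆ x) ⋆ (w ⋆ x)) ⋆ bpow (w ⋆ x) n).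
  by rewrite !bs_mulA.
by rewrite ax.
Qed.

Lemma gcEP_fix_sol a w x x' :
  root_lim0 (fun n => bpow (a ⋆ w) n - (x ⋆ w) ⋆ bpow (a ⋆ w) n.+1) ->
  a ⋆ ((w ⋆ x') ⋆ (w ⋆ x')) = x' -> x ⋆ w ⋆ (a ⋆ w) ⋆ x' = x'.
Proof.
move=> hD ax'; symmetry.
apply: (root_lim0_fixpoint (p := x') (h := w ⋆ x') hD) => n.
by rewrite bpow_aw_wx_cancel.
Qed.

Lemma gcEP_fix_awx a w x :
  root_lim0 (fun n => bpow (a ⋆ w) n - (x ⋆ w) ⋆ bpow (a ⋆ w) n.+1) ->
  a ⋆ ((w ⋆ x) ⋆ (w ⋆ x)) = x -> x ⋆ w ⋆ (a ⋆ w) ⋆ (a ⋆ w ⋆ x) = a ⋆ w ⋆ x.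
Proof.
move=> hD ax; symmetry.
apply: (root_lim0_fixpoint (p := a ⋆ w ⋆ x) (h := w ⋆ x) hD) => n.
rewrite -[in LHS](bpow_aw_wx_cancel n ax) bs_mulA -bpowSl.
by rewrite -[bpow _ n.+1]/(bpow (a ⋆ w) n ⋆ (a ⋆ w)) !bs_mulA.
Qed.

Lemma is_wgcEP_uniq a w x1 x2 : is_wgcEP a w x1 -> is_wgcEP a w x2 -> x1 = x2.
Proof.
case=> ax1 sx1 hD1 [ax2 sx2 hD2].
have fix12 := gcEP_fix_sol hD1 ax2.
have fix11 := gcEP_fix_sol hD1 ax1.
have fix21 := gcEP_fix_sol hD2 ax1.
have wawx : w ⋆ a ⋆ w ⋆ x1 = w ⋆ a ⋆ w ⋆ x2.
  apply: selfadjoint_absorb_eq sx1 sx2 _ _.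
    by rewrite -[in RHS]fix12 !bs_mulA.
  by rewrite -[in RHS]fix21 !bs_mulA.
have wx : w ⋆ x1 = w ⋆ x2.
  rewrite -[in LHS]fix11 -[in RHS]fix12.
  by have := congr1 (bs_mul (w ⋆ x1)) wawx; rewrite !bs_mulA.
by rewrite -ax1 -ax2 wx.
Qed.

Lemma is_wgcEP_wcore_add a w z y c :
  a = z + y -> y ⋆ w ⋆ z = 0 -> is_wcore z w c -> wqnil w y -> is_wgcEP a w c.
Proof.
move=> -> yz [zc sc cz] qy.
have ywc : y ⋆ (w ⋆ c) = 0.
  by rewrite -zc !bs_mulA yz !bs_mul0l.
split.
- by rewrite bs_mulDl zc bs_mulA ywc bs_mul0l addr0.
- by rewrite bs_mulDr !bs_mulDl -!bs_mulA ywc bs_mul0r addr0 !bs_mulA.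
- have ywzw : (y ⋆ w) ⋆ (z ⋆ w) = 0 by rewrite bs_mulA yz bs_mul0l.
  set m := bs_one A - c ⋆ w ⋆ ((z + y) ⋆ w).
  have mzw : m ⋆ (z ⋆ w) = 0.
    rewrite /m bs_mulBl bs_mul1l (bs_mulDl z y w) bs_mulDr bs_mulDl.
    by rewrite -!(bs_mulA (c ⋆ w)) cz ywzw bs_mul0r addr0 subrr.
  apply: root_lim0_eqS (root_lim0_mull m qy) => n.
  by rewrite bpowS_sub -/m bs_mulDl mul_bpowD.
Qed.

Section CoreEPDecomposition.
Variables (a w x : A).
Hypothesis gcEP_x : is_wgcEP a w x.
Local Notation z := (a ⋆ w ⋆ x ⋆ w ⋆ a).

Let ax : a ⋆ ((w ⋆ x) ⋆ (w ⋆ x)) = x. Proof. by case: gcEP_x. Qed.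
Let awx_selfadjoint : (w ⋆ a ⋆ w ⋆ x)^# = w ⋆ a ⋆ w ⋆ x.
Proof. by case: gcEP_x. Qed.
Let x_decay : root_lim0 (fun n => bpow (a ⋆ w) n - (x ⋆ w) ⋆ bpow (a ⋆ w) n.+1).
Proof. by case: gcEP_x. Qed.
Let fix_x : x ⋆ w ⋆ (a ⋆ w) ⋆ x = x := gcEP_fix_sol x_decay ax.
Let fix_awx : x ⋆ w ⋆ (a ⋆ w) ⋆ (a ⋆ w ⋆ x) = a ⋆ w ⋆ x :=
  gcEP_fix_awx x_decay ax.

Lemma gcEP_wcore : is_wcore z w x.
Proof.
split.
- have -> : z ⋆ ((w ⋆ x) ⋆ (w ⋆ x)) = a ⋆ w ⋆ x ⋆ w ⋆ (a ⋆ ((w ⋆ x) ⋆ (w ⋆ x))).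
    by rewrite !bs_mulA.
  by rewrite ax -[RHS]ax !bs_mulA.
- have -> : w ⋆ z ⋆ w ⋆ x = w ⋆ a ⋆ w ⋆ x.
    by rewrite -[in RHS]fix_x !bs_mulA.
  exact: awx_selfadjoint.
- have -> : x ⋆ w ⋆ ((z ⋆ w) ⋆ (z ⋆ w))
          = (x ⋆ w ⋆ (a ⋆ w) ⋆ x) ⋆ w ⋆ (a ⋆ w) ⋆ (a ⋆ w ⋆ x) ⋆ w ⋆ a ⋆ w.
    by rewrite !bs_mulA.
  by rewrite fix_x fix_awx.
Qed.

Lemma gcEP_orthogonal : (w ⋆ z)^# ⋆ (w ⋆ (a - z)) = 0.
Proof.
have -> : w ⋆ z = (w ⋆ a ⋆ w ⋆ x) ⋆ (w ⋆ a) by rewrite !bs_mulA.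
rewrite bs_starM awx_selfadjoint -bs_mulA.
suff -> : w ⋆ a ⋆ w ⋆ x ⋆ (w ⋆ (a - z)) = 0 by rewrite bs_mul0r.
rewrite !bs_mulBr.
have -> : w ⋆ a ⋆ w ⋆ x ⋆ (w ⋆ z) = w ⋆ a ⋆ w ⋆ (x ⋆ w ⋆ (a ⋆ w) ⋆ x) ⋆ w ⋆ a.
  by rewrite !bs_mulA.
by rewrite fix_x !bs_mulA subrr.
Qed.

Lemma gcEP_annihilate : (a - z) ⋆ w ⋆ z = 0.
Proof.
rewrite !bs_mulBl.
have -> : z ⋆ w ⋆ z = a ⋆ w ⋆ (x ⋆ w ⋆ (a ⋆ w) ⋆ (a ⋆ w ⋆ x)) ⋆ w ⋆ a.
  by rewrite !bs_mulA.
by rewrite fix_awx !bs_mulA subrr.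
Qed.

Lemma gcEP_wqnil : wqnil w (a - z).
Proof.
set m := bs_one A - a ⋆ w ⋆ x ⋆ w.
have yw : (a - z) ⋆ w = m ⋆ (a ⋆ w) by rewrite !bs_mulBl bs_mul1l !bs_mulA.
have mxw : m ⋆ (x ⋆ w) = 0.
  by rewrite bs_mulBl bs_mul1l -[in X in X - _]ax !bs_mulA subrr.
have mgm : m ⋆ (a ⋆ w) ⋆ m = m ⋆ (a ⋆ w).
  rewrite [in LHS]bs_mulBr bs_mul1r !bs_mulBl bs_mul1l.
  have -> : a ⋆ w ⋆ x ⋆ w ⋆ (a ⋆ w) ⋆ (a ⋆ w ⋆ x ⋆ w)
          = a ⋆ w ⋆ (x ⋆ w ⋆ (a ⋆ w) ⋆ (a ⋆ w ⋆ x)) ⋆ w.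
    by rewrite !bs_mulA.
  by rewrite fix_awx !bs_mulA subrr subr0.
apply: root_lim0_eqS (root_lim0_mull m x_decay) => n.
rewrite yw (bpow_mul_absorb n mgm) bpowS_sub bs_mulA.
by rewrite bs_mulBr bs_mul1r bs_mulA mxw bs_mul0l subr0.
Qed.

End CoreEPDecomposition.

End BStarAlgTheory.

Theorem theorem3p1 (R : realType) (A : BStarAlg R) (a w : A) :
  (has_wgcEP a w <->
     exists z y : A, [/\ a = z + y, (w ⋆ z)^# ⋆ (w ⋆ y) = 0,
                        y ⋆ w ⋆ z = 0, has_wcore z w & wqnil w y]) /\
  (has_wgcEP a w <->
     exists z y : A, [/\ a = z + y, y ⋆ w ⋆ z = 0,
                        has_wcore z w & wqnil w y]) /\
  (forall x z y c : A,
     is_wgcEP a w x -> a = z + y -> y ⋆ w ⋆ z = 0 ->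
     is_wcore z w c -> wqnil w y -> x = c).
Proof.
have decomp x : is_wgcEP a w x ->
    exists z y : A, [/\ a = z + y, (w ⋆ z)^# ⋆ (w ⋆ y) = 0,
                       y ⋆ w ⋆ z = 0, has_wcore z w & wqnil w y].
  move=> hx; exists (a ⋆ w ⋆ x ⋆ w ⋆ a), (a - a ⋆ w ⋆ x ⋆ w ⋆ a).
  split; first by rewrite addrC subrK.
  - exact: gcEP_orthogonal.
  - exact: gcEP_annihilate.
  - by exists x; apply: gcEP_wcore.
  - exact: gcEP_wqnil.
have recompose (z y : A) : a = z + y -> y ⋆ w ⋆ z = 0 -> has_wcore z w ->
    wqnil w y -> has_wgcEP a w.
  by move=> azy yz [c hc] qy; exists c; apply: is_wgcEP_wcore_add azy yz hc qy.
split; [|split].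
- split; first by case=> x /decomp.
  by case=> z [y [azy _ yz zc qy]]; apply: recompose azy yz zc qy.
- split; last by case=> z [y [azy yz zc qy]]; apply: recompose azy yz zc qy.
  by case=> x /decomp [z [y [azy _ yz zc qy]]]; exists z, y.
- move=> x z y c hx azy yz hc qy.
  exact: is_wgcEP_uniq hx (is_wgcEP_wcore_add azy yz hc qy).
Qed.
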